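(* Let $\alpha>0$. Then at least one of the following two statements fails: (A) $\delta_{\min,1}^{(\alpha)}(N)\le \frac{1}{N\log N}$ for infinitely many integers $N$; (B) $\delta_{\min,2}^{(\alpha)}(N)\ge \frac{1}{N(\log N)^{2/3}}$ for all sufficiently large integers $N$.
   Context: For $\alpha>0$, let $0<\lambda_1<\lambda_2<\cdots$ be the distinct values of $\alpha m^2+n^2$ with integers $m,n\ge1$, listed in increasing order. For $N\ge 3$ and $k\ge1$, let $\delta_{\min,k}^{(\alpha)}(N)$ be the $k$-th smallest among the gaps $\lambda_{i+1}-\lambda_i$, $1\le i<N$ (counted with multiplicity); in particular $\delta_{\min,1}^{(\alpha)}(N)=\min\{\lambda_{i+1}-\lambda_i:1\le i<N\}$. (Statements (A) and (B) are the properties that a Poisson random sequence satisfies almost surely.) *)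

From mathcomp Require Import all_boot all_order all_algebra.
From mathcomp Require Import reals exp.
Set Implicit Arguments. Unset Strict Implicit. Unset Printing Implicit Defensive.
Import Order.TTheory GRing.Theory Num.Theory.
Local Open Scope ring_scope.

Definition is_value (R : realType) (alpha x : R) : Prop :=
  exists m n : nat, (1 <= m)%N /\ (1 <= n)%N /\
    x = alpha * (m%:R) ^+ 2 + (n%:R) ^+ 2.

(* lam is the increasing enumeration of the DISTINCT values:
   lam 0 = lambda_1, lam 1 = lambda_2, ... (0-indexed: lam i = lambda_{i+1}). *)
Definition is_value_enum (R : realType) (alpha : R) (lam : nat -> R) : Prop :=
  (forall i, lam i < lam i.+1) /\
  (forall x, (exists i, lam i = x) <-> is_value alpha x).

(* The gaps lambda_{i+1} - lambda_i, 1 <= i < N, as a sequence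
   (in the 0-indexed lam: lam i.+1 - lam i for 0 <= i < N-1). *)
Definition gaps (R : realType) (lam : nat -> R) (N : nat) : seq R :=
  [seq lam i.+1 - lam i | i <- iota 0 N.-1].

(* k-th smallest gap (counted with multiplicity), k >= 1. *)
Definition delta_min (R : realType) (lam : nat -> R) (k N : nat) : R :=
  nth 0 (sort <=%O (gaps lam N)) k.-1.

(* If alpha m^2 + n^2 takes some value twice, with m' < m, then
   (m^2 - m'^2) alpha is an integer, so every gap is at least 1/(m^2 - m'^2)
   and (A) fails.  Otherwise every value has a unique representation, and
   counting lattice points in boxes shows that the index of 4 lambda is at most
   25 times the index of lambda (up to a constant).  Since
   4 (alpha m^2 + n^2) = alpha (2m)^2 + (2n)^2, a gap lambda_{i+1} - lambda_i
   with i < N produces a second gap of size at most 4 (lambda_{i+1} - lambda_i)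
   among the first 25 N values.  Hence delta_2(25 N) <= 4 delta_1(N), which is
   incompatible with (A) and (B) because 100 (log 25 N)^(2/3) < log N for
   large N. *)

From mathcomp Require Import all_boot all_order all_algebra.
From mathcomp Require Import reals sequences exp.
From mathcomp Require Import zify ring lra.
Import Order.TTheory GRing.Theory Num.Theory.
Local Open Scope ring_scope.

Section Gaps.
Context {R : realType}.
Variable lam : nat -> R.

Lemma delta_min1_gap {N} :
  (2 <= N)%N -> exists2 i, (i < N.-1)%N & delta_min lam 1 N = lam i.+1 - lam i.
Proof.
move=> N_ge2; have : delta_min lam 1 N \in gaps lam N.
  by rewrite -(mem_sort <=%O) mem_nth // size_sort size_map size_iota; lia.
by case/mapP=> i; rewrite mem_iota => /andP[_ lt_iN] ->; exists i.
Qed.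

Lemma delta_min2_le N c i j : i != j -> (i < N.-1)%N -> (j < N.-1)%N ->
  lam i.+1 - lam i <= c -> lam j.+1 - lam j <= c -> delta_min lam 2 N <= c.
Proof.
move=> neq_ij lt_iN lt_jN gap_i gap_j.
apply: (nth_count_le _ (sort_sorted le_total _)).
rewrite count_sort /gaps count_map -size_filter.
have -> : 2%N = size [:: i; j] by [].
apply: uniq_leq_size; first by rewrite /= inE neq_ij.
by move=> k; rewrite !inE mem_filter mem_iota /= => /orP[] /eqP->; rewrite ?gap_i ?gap_j.
Qed.

End Gaps.

Section IncreasingSequence.
Context {R : realType}.
Variable lam : nat -> R.
Hypothesis lam_incr : forall i, lam i < lam i.+1.

Let lam_le : {mono lam : i j / (i <= j)%N >-> i <= j} :=
  Order.NatMonotonyTheory.incnP lam_incr.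

Lemma size_values_le (s : seq R) k : uniq s ->
  (forall x, x \in s -> (exists l, lam l = x) /\ x <= lam k) -> (size s <= k.+1)%N.
Proof.
move=> uniq_s s_vals; rewrite -(size_iota 0 k.+1) -(size_map lam).
apply: uniq_leq_size => // x /s_vals[[l <-]]; rewrite lam_le => le_lk.
by rewrite map_f // mem_iota.
Qed.

Lemma size_values_ge (s : seq R) k :
  (forall l, (l <= k)%N -> lam l \in s) -> (k.+1 <= size s)%N.
Proof.
move=> s_vals; rewrite -(size_iota 0 k.+1) -(size_map lam).
apply: uniq_leq_size; first by rewrite map_inj_uniq ?iota_uniq //; exact: inc_inj.
by move=> x /mapP[l]; rewrite mem_iota => /andP[_ ?] ->; apply: s_vals.
Qed.

End IncreasingSequence.

Section Thresholds.
Context {R : realType}.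

Definition boundA (N : nat) : R := 1 / (N%:R * ln (N%:R : R)).
Definition boundB (N : nat) : R := 1 / (N%:R * (ln (N%:R : R)) `^ (2 / 3)).

Lemma ln_nat_eventually_ge (T : R) : exists M, forall N, (M <= N)%N -> T <= ln (N%:R : R).
Proof.
exists (Num.truncn (expR T)).+1 => N le_MN.
have lt_TN : expR T < N%:R by apply: lt_le_trans (truncnS_gt _) _; rewrite ler_nat.
by rewrite -[T]expRK ler_ln ?posrE ?expR_gt0 ?(lt_trans (expR_gt0 T)) ?ltW.
Qed.

Lemma boundA_eventually_lt (c : R) : 0 < c -> exists M, forall N, (M <= N)%N -> boundA N < c.
Proof.
move=> c_gt0; have [M ln_ge1] := ln_nat_eventually_ge 1.
exists (maxn M (Num.truncn c^-1).+1) => N; rewrite geq_max => /andP[/ln_ge1 ln_N le_N].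
have lt_cN : c^-1 < N%:R by apply: lt_le_trans (truncnS_gt _) _; rewrite ler_nat.
have N_gt0 : 0 < N%:R :> R by apply: lt_trans lt_cN; rewrite invr_gt0.
have lnN_gt0 : 0 < ln (N%:R : R) := lt_le_trans ltr01 ln_N.
rewrite /boundA div1r -[c]invrK ltf_pV2 ?posrE ?invr_gt0 ?mulr_gt0 //.
by apply: lt_le_trans lt_cN _; rewrite ler_pMr.
Qed.

Lemma mulr100_powR23_lt {L : R} : 200 ^+ 3 <= L -> 100 * (2 * L) `^ (2 / 3) < L.
Proof.
move=> L_ge; set s := (2 * L) `^ (3^-1).
have L_ge0 : 0 <= 2 * L by lra.
have s_cube : s ^+ 3 = 2 * L.
  by rewrite -powR_mulrn ?powR_ge0 // /s -powRrM mulVf ?pnatr_eq0 // powRr1.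
have s_sq : (2 * L) `^ (2 / 3) = s ^+ 2.
  by rewrite -powR_mulrn ?powR_ge0 // /s -powRrM [3^-1 * _]mulrC.
have s_gt200 : 200 < s.
  rewrite ltNge; apply/negP => s_le; have : s ^+ 3 <= 200 ^+ 3.
    by rewrite lerXn2r ?nnegrE ?powR_ge0.
  by rewrite s_cube; lra.
have s2_gt0 : 0 < s ^+ 2 by rewrite exprn_gt0 //; lra.
have : 2 * L = s * s ^+ 2 by rewrite -s_cube exprS.
by rewrite s_sq; nra.
Qed.

Lemma boundA_scaled_lt_boundB {N : nat} :
  (25 <= N)%N -> 200 ^+ 3 <= ln (N%:R : R) -> 4 * boundA N < boundB (25 * N).
Proof.
move=> N_ge25 ln_N_ge; set L := ln (N%:R : R) in ln_N_ge *.
have N_gt0 : 0 < N%:R :> R by rewrite ltr0n; lia.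
have ln25_le : ln (25 : R) <= L by rewrite ler_ln ?posrE ?ler_nat // (ltr0n R 25).
have ln_25N : ln ((25 * N)%:R : R) <= 2 * L.
  by rewrite natrM lnM ?posrE ?(ltr0n R 25) // -/L; lra.
set p := ln ((25 * N)%:R : R) `^ (2 / 3).
have ln_25N_gt0 : 0 < ln ((25 * N)%:R : R) by apply: ln_gt0; rewrite (ltr1n R); lia.
have p_gt0 : 0 < p by exact: powR_gt0.
have p_small : 100 * p < L.
  apply: le_lt_trans (mulr100_powR23_lt ln_N_ge); rewrite ler_pM2l //.
  apply: ge0_ler_powR => //; rewrite ?nnegrE ?ltW //; lra.
have : 0 < N%:R * (L - 100 * p) by rewrite mulr_gt0 // subr_gt0.
rewrite /boundA /boundB -/L -/p !div1r natrM -[4]invrK -invfM ltf_pV2 ?posrE.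
- by nra.
- by rewrite mulr_gt0 ?invr_gt0 ?mulr_gt0 //; lra.
- by rewrite !mulr_gt0 //; lra.
Qed.

End Thresholds.

Definition minimal_gap_often_small {R : realType} (lam : nat -> R) : Prop :=
  forall M : nat, exists N : nat,
    (M <= N)%N /\ (3 <= N)%N /\ delta_min lam 1 N <= boundA N.

Definition second_gap_eventually_large {R : realType} (lam : nat -> R) : Prop :=
  exists M : nat, forall N : nat,
    (M <= N)%N -> (3 <= N)%N -> boundB N <= delta_min lam 2 N.

Lemma not_often_small_of_gap_ge {R : realType} {lam : nat -> R} {c : R} :
  0 < c -> (forall k, c <= lam k.+1 - lam k) -> ~ minimal_gap_often_small lam.
Proof.
move=> c_gt0 gap_ge small; have [M lt_c] := boundA_eventually_lt c c_gt0.
have [N [le_MN [N_ge3 small_N]]] := small M.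
have [i _ eq_i] := delta_min1_gap lam (ltnW N_ge3).
by have := le_lt_trans small_N (lt_c N le_MN); rewrite eq_i ltNge gap_ge.
Qed.

Lemma exists_sq_bracket {R : realType} {a c : R} : 0 < a -> 0 <= c ->
  exists U : nat, a * U%:R ^+ 2 <= c < a * U.+1%:R ^+ 2.
Proof.
move=> a_gt0 c_ge0; set P := fun n : nat => c < a * n%:R ^+ 2.
have exP : exists n, P n.
  set n := (Num.truncn (c / a)).+1; exists n; rewrite /P.
  have c_lt : c < a * n%:R by rewrite -ltr_pdivrMl // mulrC; exact: truncnS_gt.
  by apply: lt_le_trans c_lt _; rewrite ler_pM2l // -natrX ler_nat; nia.
case: (ex_minnP exP) => -[|n]; rewrite /P; first by rewrite expr0n mulr0 ltNge c_ge0.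
move=> c_lt min_n; exists n; rewrite c_lt andbT leNgt.
by apply/negP => /min_n; rewrite ltnn.
Qed.

Definition qform {R : realType} (alpha : R) (m n : nat) : R :=
  alpha * m%:R ^+ 2 + n%:R ^+ 2.

Lemma qform_double {R : realType} (alpha : R) m n :
  qform alpha (2 * m) (2 * n) = 4 * qform alpha m n.
Proof. by rewrite /qform !natrM; ring. Qed.

Lemma qform_ge_l {R : realType} (alpha : R) m n : alpha * m%:R ^+ 2 <= qform alpha m n.
Proof. by rewrite ler_wpDr ?sqr_ge0. Qed.

Lemma qform_ge_r {R : realType} (alpha : R) m n : 0 <= alpha -> n%:R ^+ 2 <= qform alpha m n.
Proof. by move=> alpha_ge0; rewrite ler_wpDl ?mulr_ge0 ?sqr_ge0. Qed.

Section Values.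
Context {R : realType}.
Variables (alpha : R) (lam : nat -> R).
Hypothesis alpha_gt0 : 0 < alpha.
Hypothesis lam_incr : forall i, lam i < lam i.+1.
Hypothesis lam_values : forall x, (exists i, lam i = x) <-> is_value alpha x.

Let lam_le : {mono lam : i j / (i <= j)%N >-> i <= j} :=
  Order.NatMonotonyTheory.incnP lam_incr.

Let lam_lt : {mono lam : i j / (i < j)%N >-> i < j} := leW_mono lam_le.

Lemma lam_qform i : exists m n, [/\ (0 < m)%N, (0 < n)%N & lam i = qform alpha m n].
Proof.
have [/(_ (ex_intro _ i erefl)) [m [n [m_gt0 [n_gt0 ->]]]] _] := lam_values (lam i).
by exists m, n.
Qed.

Lemma qform_lam m n : (0 < m)%N -> (0 < n)%N -> exists j, lam j = qform alpha m n.
Proof. by move=> m_gt0 n_gt0; apply/lam_values; exists m, n. Qed.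

Lemma lam_gt0 i : 0 < lam i.
Proof.
have [m [n [_ n_gt0 ->]]] := lam_qform i.
by apply: lt_le_trans (qform_ge_r alpha _ _ (ltW alpha_gt0)); rewrite exprn_gt0 ?ltr0n.
Qed.

Lemma index_lt_box A B k :
  lam k < alpha * A.+1%:R ^+ 2 -> lam k < B.+1%:R ^+ 2 -> (k.+1 <= A * B)%N.
Proof.
move=> lt_kA lt_kB.
have <- : size [seq qform alpha m n | m <- iota 1 A, n <- iota 1 B] = (A * B)%N.
  by rewrite size_allpairs !size_iota.
apply: size_values_ge => // l le_lk; have [m [n [m_gt0 n_gt0 eq_l]]] := lam_qform l.
have le_l : qform alpha m n <= lam k by rewrite -eq_l lam_le.
rewrite eq_l; apply/allpairsP; exists (m, n); rewrite !mem_iota /= !add1n !ltnS.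
rewrite m_gt0 n_gt0 /=; split => //; rewrite leqNgt; apply/negP => lt.
- have := le_lt_trans (le_trans (qform_ge_l alpha m n) le_l) lt_kA.
  by rewrite ltr_pM2l // -!natrX ltr_nat ltn_exp2r // ltnS leqNgt lt.
- have := le_lt_trans (le_trans (qform_ge_r alpha m n (ltW alpha_gt0)) le_l) lt_kB.
  by rewrite -!natrX ltr_nat ltn_exp2r // ltnS leqNgt lt.
Qed.

Lemma exists_index_quadruple i : exists j, lam j = 4 * lam i.
Proof.
have [m [n [m_gt0 n_gt0 ->]]] := lam_qform i.
by rewrite -qform_double; apply: qform_lam; rewrite muln_gt0.
Qed.

Lemma gap_ge_of_int_multiple (Q : nat) (z : int) :
  (0 < Q)%N -> Q%:R * alpha = z%:~R -> forall k, Q%:R^-1 <= lam k.+1 - lam k.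
Proof.
move=> Q_gt0 Qalpha k; have := lam_incr k; rewrite -subr_gt0.
have [m [n [_ _ ->]]] := lam_qform k; have [m' [n' [_ _ ->]]] := lam_qform k.+1.
have QR_gt0 : 0 < Q%:R :> R by rewrite ltr0n.
set w : int := z * ((m' ^ 2)%:Z - (m ^ 2)%:Z) + Q%:Z * ((n' ^ 2)%:Z - (n ^ 2)%:Z).
have Qgap : Q%:R * (qform alpha m' n' - qform alpha m n) = w%:~R.
  by rewrite /w /qform intrD !intrM !intrB -!pmulrn -Qalpha !natrX; ring.
rewrite -(ltr_pM2l QR_gt0) -(ler_pM2l QR_gt0) mulr0 mulfV ?gt_eqF // Qgap.
by rewrite ltr0z ler1z.
Qed.

Lemma often_small_qform_inj : minimal_gap_often_small lam ->
  forall a b a' b', qform alpha a b = qform alpha a' b' -> (a, b) = (a', b').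
Proof.
move=> small; suff le_fst a b a' b' : qform alpha a b = qform alpha a' b' -> (a <= a')%N.
  move=> a b a' b' eq_ab; have eq_a : a = a'.
    by apply/eqP; rewrite eqn_leq (le_fst _ _ _ _ eq_ab) (le_fst _ _ _ _ (esym eq_ab)).
  move: eq_ab; rewrite /qform eq_a => /addrI /eqP.
  by rewrite -!natrX eqr_nat eqn_exp2r // => /eqP ->.
move=> eq_ab; rewrite leqNgt; apply/negP => lt_a.
have Q_gt0 : (0 < a ^ 2 - a' ^ 2)%N by rewrite subn_gt0 ltn_exp2r.
have Qalpha : (a ^ 2 - a' ^ 2)%N%:R * alpha = ((b' ^ 2)%:Z - (b ^ 2)%:Z)%:~R.
  rewrite natrB; last by rewrite leq_exp2r // ltnW.
  rewrite intrB -!pmulrn !natrX mulrBl.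
  by move: eq_ab; rewrite /qform; lra.
apply: (not_often_small_of_gap_ge _ (gap_ge_of_int_multiple _ _ Q_gt0 Qalpha) small).
by rewrite invr_gt0 ltr0n.
Qed.

Section UniqueRepresentation.
Hypothesis qform_inj :
  forall a b a' b', qform alpha a b = qform alpha a' b' -> (a, b) = (a', b').

Lemma box_le_index U V k : qform alpha U V <= lam k -> (U * V <= k.+1)%N.
Proof.
move=> le_k.
have <- : size [seq qform alpha m n | m <- iota 1 U, n <- iota 1 V] = (U * V)%N.
  by rewrite size_allpairs !size_iota.
apply: size_values_le => //.
  apply: allpairs_uniq; rewrite ?iota_uniq // => -[m n] [m' n'] _ _ /=; exact: qform_inj.
move=> x /allpairsP[[m n] [/=]]; rewrite !mem_iota !add1n !ltnS => /andP[m_gt0 le_mU].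
move=> /andP[n_gt0 le_nV] ->; split; first exact: qform_lam.
apply: le_trans le_k; rewrite lerD ?ler_pM2l // lerXn2r ?nnegrE ?ler_nat //.
Qed.

Lemma index_quadruple_le :
  exists c, forall i j, lam j = 4 * lam i -> (j.+1 <= maxn (25 * i.+1) c)%N.
Proof.
have c_ge0 : 0 <= 8 * alpha + 8 by rewrite addr_ge0 // mulr_ge0 // ltW.
have [A0 /andP[_ lt_A0]] := exists_sq_bracket alpha_gt0 c_ge0.
have [B0 /andP[_ lt_B0]] := exists_sq_bracket ltr01 c_ge0.
exists (A0 * B0)%N => i j eq_j.
have half_ge0 : 0 <= lam i / 2 by rewrite divr_ge0 ?ltW ?lam_gt0.
have [U /andP[le_U lt_U]] := exists_sq_bracket alpha_gt0 half_ge0.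
have [V /andP[le_V lt_V]] := exists_sq_bracket ltr01 half_ge0.
rewrite !mul1r in le_V lt_V lt_B0.
(* Either the box [1, U] x [1, V] lies below lam i and [1, 3U + 2] x [1, 3V + 2]
   covers everything below 4 lam i, or lam i is bounded. *)
have [/andP[U_gt0 V_gt0] | UV0] := boolP ((0 < U) && (0 < V))%N.
- have le_UV : (U * V <= i.+1)%N by apply: box_le_index; rewrite /qform; lra.
  suff : (j.+1 <= (3 * U + 2) * (3 * V + 2))%N by nia.
  have succ3 W : (3 * W + 2).+1%:R = 3 * W.+1%:R :> R by rewrite -natrM; congr (_%:R); lia.
  apply: index_lt_box; rewrite eq_j succ3.
  + have -> : alpha * (3 * U.+1%:R) ^+ 2 = 9 * (alpha * U.+1%:R ^+ 2) by ring.
    lra.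
  + have -> : (3 * V.+1%:R) ^+ 2 = 9 * V.+1%:R ^+ 2 :> R by ring.
    lra.
- have small_X : 4 * lam i < 8 * alpha + 8.
    case/nandP: UV0; rewrite -eqn0Ngt => /eqP W0; [move: lt_U | move: lt_V];
      rewrite W0 ?expr1n ?mulr1; move: alpha_gt0; lra.
  suff : (j.+1 <= A0 * B0)%N by lia.
  by apply: index_lt_box; rewrite eq_j; lra.
Qed.

Lemma delta_min2_le_4delta_min1 :
  exists c, forall N, (maxn 2 c <= N)%N -> delta_min lam 2 (25 * N) <= 4 * delta_min lam 1 N.
Proof.
have [c index_le] := index_quadruple_le; exists c => N.
rewrite geq_max => /andP[N_ge2 c_le_N].
have [i lt_iN ->] := delta_min1_gap lam N_ge2.
have [j0 eq_j0] := exists_index_quadruple i.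
have [j1 eq_j1] := exists_index_quadruple i.+1.
have lt_j01 : (j0 < j1)%N by rewrite -lam_lt eq_j0 eq_j1 ltr_pM2l.
have := index_le _ _ eq_j1 => j1_le.
have gap_gt0 : 0 < lam i.+1 - lam i by rewrite subr_gt0.
apply: (delta_min2_le _ _ _ i j0).
- by apply/eqP => eq_i; move: eq_j0 (lam_gt0 i); rewrite -eq_i; lra.
- by lia.
- by lia.
- by lra.
- have : lam j0.+1 <= lam j1 by rewrite lam_le.
  by rewrite eq_j0 eq_j1; lra.
Qed.

End UniqueRepresentation.

Lemma often_small_not_eventually_large :
  minimal_gap_often_small lam -> ~ second_gap_eventually_large lam.
Proof.
move=> small [M large].
have [c delta2_le] := delta_min2_le_4delta_min1 (often_small_qform_inj small).
have [M' ln_ge] := ln_nat_eventually_ge (200 ^+ 3 : R).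
have [N [le_N [N_ge3 small_N]]] := small (maxn (maxn 25 M) (maxn c M')).
move: le_N; rewrite !geq_max => /andP[/andP[N_ge25 M_le] /andP[c_le M'_le]].
have large_25N : boundB (25 * N) <= delta_min lam 2 (25 * N) by apply: large; lia.
have delta2_small : delta_min lam 2 (25 * N) <= 4 * delta_min lam 1 N.
  by apply: delta2_le; lia.
have := boundA_scaled_lt_boundB N_ge25 (ln_ge N M'_le).
lra.
Qed.

End Values.

Theorem theorem1p4 (R : realType) (alpha : R) (lam : nat -> R) :
  0 < alpha -> is_value_enum alpha lam ->
  ~ ( (* (A) *)
      (forall M : nat, exists N : nat, (M <= N)%N /\ (3 <= N)%N /\
         delta_min lam 1 N <= 1 / (N%:R * ln (N%:R : R)))
      /\
      (* (B) *)
      (exists M : nat, forall N : nat, (M <= N)%N -> (3 <= N)%N ->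
         1 / (N%:R * (ln (N%:R : R)) `^ (2 / 3)) <= delta_min lam 2 N) ).
Proof.
move=> alpha_gt0 [lam_incr lam_values] [small large].
exact: often_small_not_eventually_large alpha_gt0 lam_incr lam_values small large.
Qed.
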